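(* Let $n\ge3$ and $2\le j\le n-1$. A permutation $\sigma\in\mathfrak S_n$ is minimal in the right weak order within its $\equiv^{(j)}$-class if and only if $\sigma$ admits a reduced word accepted by the automaton $\mathcal U(j)$.
   Context: Simple transpositions $s_i=(i,i+1)$, $1\le i\le n-1$. A word $s_{i_1}\cdots s_{i_k}$ represents the permutation obtained from the identity word $12\cdots n$ by successively swapping the letters in positions $i_1$, then $i_2$, \dots, then $i_k$; it is reduced if $k$ is minimal (equal to the number of inversions). Right weak order: $\sigma\le\tau$ iff value-inversions of $\sigma$ are contained in those of $\tau$. The congruence $\equiv^{(j)}$ on $\mathfrak S_n$ (permutations as words) is the equivalence relation generated by $U\,j\,V\,ac\,W\equiv U\,j\,V\,ca\,W$ for all $a<j<c$ with $a,c$ adjacent letters and $U,V,W$ words (equivalently, the permutree congruence for the decoration with $\delta_j=\text{up}$ and all other letters none). The automaton $\mathcal U(j)$ over the alphabet $\{s_1,\dots,s_{n-1}\}$ has states $h_k,i_k$ for $j-1\le k\le n-1$ and $d_k$ for $j-1\le k\le n-2$; initial state $h_{j-1}$; accepting states all $h_k$ and $i_k$; rejecting states all $d_k$. Transitions: for $j-1\le k\le n-2$, $h_k\xrightarrow{s_k}i_k$, $h_k\xrightarrow{s_{k+1}}h_{k+1}$, $i_k\xrightarrow{s_{k+1}}d_k$; and $h_{n-1}\xrightarrow{s_{n-1}}i_{n-1}$. Every letter not listed at a state leaves the state unchanged (so each $d_k$ is a rejecting sink). *)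

From Stdlib Require Import Relation_Operators.
From mathcomp Require Import all_boot.

Set Implicit Arguments.
Unset Strict Implicit.
Unset Printing Implicit Defensive.

(* Permutations of [n] = {1,...,n} are represented as words (seq nat)
   that are rearrangements of 1 2 ... n. Positions are 1-indexed. *)
Definition is_perm (n : nat) (w : seq nat) : Prop := perm_eq w (iota 1 n).

Definition id_word (n : nat) : seq nat := iota 1 n.

(* swap the letters in positions i and i+1 (1-indexed); identity if out of range *)
Definition swap_pos (w : seq nat) (i : nat) : seq nat :=
  if (1 <= i) && (i < size w) then
    take i.-1 w ++ [:: nth 0 w i; nth 0 w i.-1] ++ drop i.+1 w
  else w.

(* the permutation represented by the word s_{i_1} ... s_{i_k}: successively
   swap positions i_1, then i_2, ..., then i_k, starting from 12...n *)
Definition word_perm (n : nat) (ws : seq nat) : seq nat :=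
  foldl swap_pos (id_word n) ws.

Definition ninv (w : seq nat) : nat :=
  \sum_(p < size w) \sum_(q < size w)
     ((p < q) && (nth 0 w q < nth 0 w p)).

Definition reduced_word (n : nat) (ws : seq nat) (sigma : seq nat) : Prop :=
  all (fun i => (1 <= i) && (i <= n - 1)) ws /\
  word_perm n ws = sigma /\
  size ws = ninv sigma.

Definition vinv (w : seq nat) (a b : nat) : bool :=
  [&& a < b, a \in w, b \in w & index b w < index a w].

(* right weak order: sigma <= tau iff inversions of sigma are inversions of tau *)
Definition weak_le (sigma tau : seq nat) : Prop :=
  forall a b, vinv sigma a b -> vinv tau a b.

Definition cstep (j : nat) (u v : seq nat) : Prop :=
  exists (U V W : seq nat) (a c : nat),
    a < j < c /\
    u = U ++ j :: V ++ [:: a; c] ++ W /\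
    v = U ++ j :: V ++ [:: c; a] ++ W.

Definition congj (j : nat) : seq nat -> seq nat -> Prop :=
  clos_refl_sym_trans (seq nat) (cstep j).

Definition minimal_in_class (j : nat) (sigma : seq nat) : Prop :=
  forall tau, congj j sigma tau -> weak_le tau sigma -> tau = sigma.

Inductive ustate := Hs of nat | Is of nat | Ds of nat.

Definition ustep (n : nat) (q : ustate) (s : nat) : ustate :=
  match q with
  | Hs k => if s == k then Is k
            else if (s == k.+1) && (k <= n - 2) then Hs k.+1
            else Hs k
  | Is k => if (s == k.+1) && (k <= n - 2) then Ds k else Is k
  | Ds k => Ds k
  end.

Definition uaccepting (q : ustate) : bool :=
  match q with Hs _ | Is _ => true | Ds _ => false end.

Definition accepted (n j : nat) (ws : seq nat) : bool :=
  uaccepting (foldl (ustep n) (Hs j.-1) ws).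

From Stdlib Require Import Relation_Operators.
From mathcomp Require Import all_boot zify.

Set Implicit Arguments.
Unset Strict Implicit.
Unset Printing Implicit Defensive.

(* A permutation is minimal in its class iff the letters following [j] are
   all the letters smaller than [j] and then all the letters larger than [j]:
   the congruence only reorders a smaller and a larger letter behind [j], so
   it preserves the prefix before [j] and the two subsequences after it, while
   an adjacent pair [c a] with [a < j < c] behind [j] can be swapped to go down
   in the weak order.  Along a reduced word every letter creates an ascent, and
   the states of U(j) keep track of where [j] is and how far it is followed by
   smaller letters; the accepting runs are exactly those
   ending in such a permutation.  Conversely a reduced word is built backwards
   by undoing, at each step, a descent compatible with this invariant. *)

Lemma perm_swap2 (T : eqType) (x y : T) s : perm_eq [:: y, x & s] [:: x, y & s].
Proof. by apply/permP => a /=; rewrite addnCA. Qed.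

Lemma uniq_cat_notin (T : eqType) (P R : seq T) x :
  uniq (P ++ x :: R) -> x \notin P /\ x \notin R.
Proof. by rewrite uniq_catC /= mem_cat negb_or => /andP[/andP[-> ->]]. Qed.

Lemma index_cat_uniq_lt (T : eqType) (L R : seq T) x y :
  uniq (L ++ R) -> x \in L -> y \in R -> index x (L ++ R) < index y (L ++ R).
Proof.
rewrite cat_uniq => /and3P[_ /hasPn disjLR _] xL yR.
rewrite !index_cat xL (negbTE (disjLR y yR)).
by rewrite (leq_trans _ (leq_addr _ _)) // index_mem.
Qed.

Lemma size_swap_pos w i : size (swap_pos w i) = size w.
Proof.
rewrite /swap_pos; case: ifP => // /andP[i_gt0 i_lt].
rewrite size_cat /= size_takel ?size_drop; lia.
Qed.

Lemma swap_pos_out w i : ~~ ((1 <= i) && (i < size w)) -> swap_pos w i = w.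
Proof. by rewrite /swap_pos => /negbTE ->. Qed.

Lemma swap_pos_cat L (x y : nat) T :
  swap_pos (L ++ x :: y :: T) (size L).+1 = L ++ y :: x :: T.
Proof.
rewrite /swap_pos size_cat /= ifT; last lia.
rewrite take_size_cat // !nth_cat ltnn subnn ltnNge leqnSn subSnn /=.
rewrite drop_cat ifF; last lia.
by rewrite -addn2 addKn /= drop0.
Qed.

Lemma swap_pos_decomp (w : seq nat) i : 1 <= i < size w ->
  exists L x y T, w = L ++ x :: y :: T /\ i = (size L).+1.
Proof.
move=> /andP[i_gt0 i_lt].
exists (take i.-1 w), (nth 0 w i.-1), (nth 0 w i), (drop i.+1 w); split.
  rewrite -[LHS](cat_take_drop i.-1) (drop_nth 0); last lia.
  by rewrite (drop_nth 0 (n := i.-1.+1)) prednK.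
by rewrite size_take ifT; lia.
Qed.

Lemma perm_swap_pos w i : perm_eq (swap_pos w i) w.
Proof.
have [/swap_pos_decomp[L [x [y [T [-> ->]]]]]|/swap_pos_out ->] :=
  boolP ((1 <= i) && (i < size w)); last exact: perm_refl.
by rewrite swap_pos_cat perm_cat2l perm_swap2.
Qed.

Lemma swap_posK i : involutive (swap_pos^~ i).
Proof.
move=> w; have [/swap_pos_decomp[L [x [y [T [-> ->]]]]]|hi] :=
  boolP ((1 <= i) && (i < size w)); first by rewrite !swap_pos_cat.
by rewrite !swap_pos_out ?size_swap_pos.
Qed.

Lemma nth_swap_pos (w : seq nat) i p : 1 <= i < size w ->
  nth 0 (swap_pos w i) p =
    if p == i.-1 then nth 0 w i else if p == i then nth 0 w i.-1 else nth 0 w p.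
Proof.
move=> /swap_pos_decomp[L [x [y [T [-> ->]]]]].
rewrite swap_pos_cat /= !nth_cat ltnn subnn (ltnNge (size L).+1) leqnSn subSnn /=.
case: (ltngtP p (size L)) => hp; last by rewrite hp subnn.
  by rewrite ifF //; lia.
case: eqP => [->|hne]; first by rewrite subSnn.
have : 1 < p - size L by lia.
by case: (p - size L) => [|[|k]].
Qed.

Fixpoint ninv_rec (w : seq nat) : nat :=
  if w is x :: s then count (fun y => y < x) s + ninv_rec s else 0.

Lemma ninvE w : ninv w = ninv_rec w.
Proof.
have sum_count (a : pred nat) s : \sum_(i < size s) a (nth 0 s i) = count a s.
  by elim: s => [|x s IHs]; rewrite ?big_ord0 // big_ord_recl IHs.
rewrite /ninv; elim: w => [|x s IHs]; first by rewrite big_ord0.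
rewrite /= big_ord_recl big_ord_recl /= add0n -IHs (sum_count (fun y => y < x)).
by congr (_ + _); apply: eq_bigr => p _; rewrite big_ord_recl.
Qed.

Lemma ninv_rec_cat_perm L R1 R2 : perm_eq R1 R2 ->
  ninv_rec (L ++ R1) + ninv_rec R2 = ninv_rec (L ++ R2) + ninv_rec R1.
Proof.
move=> eqR; elim: L => [|z L IHL] /=; first by rewrite addnC.
by rewrite !count_cat (permP eqR) -!addnA IHL.
Qed.

Lemma ninv_rec_swap (w : seq nat) i : 1 <= i < size w ->
  ninv_rec (swap_pos w i) + (nth 0 w i < nth 0 w i.-1) =
  ninv_rec w + (nth 0 w i.-1 < nth 0 w i).
Proof.
move=> /swap_pos_decomp[L [x [y [T [-> ->]]]]].
rewrite swap_pos_cat /= !nth_cat ltnn subnn ifF ?subSnn /=; last lia.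
have := ninv_rec_cat_perm L (perm_swap2 x y T) => /=; lia.
Qed.

Lemma ninv_rec_iota m k : ninv_rec (iota m k) = 0.
Proof.
elim: k m => [|k IHk] m //=; rewrite IHk addn0.
by apply/eqP; rewrite -leqn0 leqNgt -has_count; apply/hasPn => z; rewrite mem_iota; lia.
Qed.

Lemma ninv_rec_swap_le w i : ninv_rec (swap_pos w i) <= (ninv_rec w).+1.
Proof.
have [hi|/swap_pos_out ->] := boolP ((1 <= i) && (i < size w)); last exact: leqnSn.
by have := ninv_rec_swap hi; lia.
Qed.

Lemma word_perm_rcons n ws i : word_perm n (rcons ws i) = swap_pos (word_perm n ws) i.
Proof. exact: foldl_rcons. Qed.

Lemma perm_word_perm n ws : perm_eq (word_perm n ws) (iota 1 n).
Proof.
elim/last_ind: ws => [|ws i IHws]; first exact: perm_refl.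
by rewrite word_perm_rcons (perm_trans (perm_swap_pos _ _)).
Qed.

Lemma size_word_perm n ws : size (word_perm n ws) = n.
Proof. by rewrite (perm_size (perm_word_perm n ws)) size_iota. Qed.

Lemma ninv_rec_word_perm n ws : ninv_rec (word_perm n ws) <= size ws.
Proof.
elim/last_ind: ws => [|ws i IHws]; first by rewrite /word_perm /id_word ninv_rec_iota.
by rewrite word_perm_rcons size_rcons (leq_trans (ninv_rec_swap_le _ _)).
Qed.

Lemma perm_iota_descent n (s : seq nat) : perm_eq s (iota 1 n) -> s != iota 1 n ->
  exists2 i, 1 <= i < size s & nth 0 s i < nth 0 s i.-1.
Proof.
move=> eq_s s_neq.
have [d [d_lt s_d]] : exists d, d.+1 < size s /\ nth 0 s d.+1 <= nth 0 s d.
  have : ~~ sorted ltn s.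
    move: s_neq; apply: contraNN => s_sorted; apply/eqP.
    apply: (irr_sorted_eq ltn_trans ltnn s_sorted (iota_ltn_sorted 1 n)).
    exact: perm_mem.
  elim: s {eq_s s_neq} => [|x [|y s] IHs] //=; case: (ltnP x y) => /= [_ /IHs|yx _].
    by move=> [d [d_lt s_d]]; exists d.+1.
  by exists 0.
exists d.+1 => //=; rewrite ltn_neqAle s_d andbT nth_uniq ?(ltnW d_lt) //.
  by rewrite (gtn_eqF (ltnSn d)).
by rewrite (perm_uniq eq_s) iota_uniq.
Qed.

Lemma ninv_rec_eq0 n (s : seq nat) : perm_eq s (iota 1 n) -> ninv_rec s = 0 -> s = iota 1 n.
Proof.
move=> eq_s s0; apply/eqP/negPn/negP => /(perm_iota_descent eq_s)[i hi desc].
by have := ninv_rec_swap hi; rewrite s0 desc; lia.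
Qed.

Definition pivot_form (j : nat) (s : seq nat) : Prop :=
  exists P S B,
    [/\ s = P ++ j :: S ++ B, all (fun x => x < j) S & all (fun x => j < x) B].

Fixpoint pivot_split (j : nat) (w : seq nat) : seq nat * seq nat * seq nat :=
  if w is x :: w' then
    if x == j then ([::], [seq y <- w' | y < j], [seq y <- w' | j < y])
    else let: (pre, small, large) := pivot_split j w' in (x :: pre, small, large)
  else ([::], [::], [::]).

Lemma pivot_split_cat j U X Y :
  [seq y <- X | y < j] = [seq y <- Y | y < j] ->
  [seq y <- X | j < y] = [seq y <- Y | j < y] ->
  pivot_split j (U ++ j :: X) = pivot_split j (U ++ j :: Y).
Proof.
move=> eq_small eq_large; elim: U => [|x U IHU] /=; first by rewrite eqxx eq_small eq_large.
by case: eqP => _; rewrite ?IHU // !filter_cat /= ltnn eq_small eq_large.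
Qed.

Lemma pivot_split_notin j P R : j \notin P ->
  pivot_split j (P ++ j :: R) = (P, [seq y <- R | y < j], [seq y <- R | j < y]).
Proof.
elim: P => [|x P IHP] /=; first by rewrite eqxx.
by rewrite inE negb_or eq_sym => /andP[/negbTE-> /IHP->].
Qed.

Lemma pivot_split_form j P S B : j \notin P ->
  all (fun x => x < j) S -> all (fun x => j < x) B ->
  pivot_split j (P ++ j :: S ++ B) = (P, S, B).
Proof.
move=> jP allS allB; rewrite pivot_split_notin // !filter_cat.
have [-> ->] : [seq y <- B | y < j] = [::] /\ [seq y <- S | j < y] = [::].
  by split; apply/eqP; rewrite -[_ == _]negbK -has_filter -all_predC;
    [apply: sub_all allB | apply: sub_all allS] => y /=; lia.
by rewrite (all_filterP allS) (all_filterP allB) cats0.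
Qed.

Lemma congj_pivot_split j u v : congj j u v -> pivot_split j u = pivot_split j v.
Proof.
elim=> {u v} [u v [U [V [W [a [c [/andP[aj jc] [-> ->]]]]]]]|//|//|u v w _ -> _ //].
have [cj ja] : (c < j) = false /\ (j < a) = false by split; apply/negbTE; lia.
by apply: pivot_split_cat; rewrite !filter_cat /= ?aj ?jc ?cj ?ja.
Qed.

Lemma congj_perm j u v : congj j u v -> perm_eq u v.
Proof.
elim=> {u v} [u v [U [V [W [a [c [_ [-> ->]]]]]]]|u|u v _|u v w _ uv _ vw].
- by rewrite perm_cat2l perm_cons perm_cat2l perm_cat2r perm_swap2.
- exact: perm_refl.
- by rewrite perm_sym.
- exact: perm_trans uv vw.
Qed.

Lemma small_large_or_descent j R : j \notin R ->
  (exists S B, [/\ R = S ++ B, all (fun x => x < j) S & all (fun x => j < x) B]) \/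
  (exists V c a W, R = V ++ c :: a :: W /\ a < j < c).
Proof.
elim: R => [|x R IHR]; first by left; exists [::], [::].
rewrite inE negb_or => /andP[xj /IHR[[S [B [-> allS allB]]]|[V [c [a [W [-> acj]]]]]]].
- case: (ltngtP x j) => [xj'|jx|ejx]; last by rewrite ejx eqxx in xj.
    by left; exists (x :: S), B; rewrite /= xj'.
  case: S allS => [|a S] /= allS.
    by left; exists [::], (x :: B); rewrite /= jx.
  by right; exists [::], x, a, (S ++ B); move: allS => /andP[-> _]; rewrite jx.
- by right; exists (x :: V), c, a, W.
Qed.

Lemma weak_le_swap_ascent L W (a c : nat) : a < c ->
  weak_le (L ++ [:: a, c & W]) (L ++ [:: c, a & W]).
Proof.
move=> ac x y /and4P[xy x_in y_in]; rewrite /vinv xy.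
have mem_swap : L ++ [:: a, c & W] =i L ++ [:: c, a & W].
  by apply: perm_mem; rewrite perm_cat2l perm_swap2.
rewrite -!mem_swap x_in y_in !index_cat.
case: (boolP (x \in L)) => xL; case: (boolP (y \in L)) => yL //.
- by have := index_mem x L; rewrite xL; lia.
- by have := index_mem y L; rewrite yL; lia.
- by rewrite !ltn_add2l /=; do ![case: eqP => ?]; lia.
Qed.

Lemma minimal_pivot_form j s : uniq s -> j \in s -> minimal_in_class j s ->
  pivot_form j s.
Proof.
move=> s_uniq js s_min; case/splitPr: js s_uniq s_min => P R s_uniq s_min.
have [_ jR] := uniq_cat_notin s_uniq.
have [[S [B [-> allS allB]]]|[V [c [a [W [eR /andP[aj jc]]]]]]] :=
  small_large_or_descent jR; first by exists P, S, B.
have eL X : P ++ j :: V ++ X = (P ++ j :: V) ++ X by rewrite -catA.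
have congr_s : congj j (P ++ j :: R) (P ++ j :: V ++ [:: a, c & W]).
  by apply/rst_sym/rst_step; exists P, V, W, a, c; rewrite eR aj jc.
have le_s : weak_le (P ++ j :: V ++ [:: a, c & W]) (P ++ j :: R).
  by rewrite eR !eL; apply: weak_le_swap_ascent; exact: ltn_trans aj jc.
move: (s_min _ congr_s le_s); rewrite eR !eL.
by move/(congr1 (drop (size (P ++ j :: V)))); rewrite !drop_size_cat // => -[]; lia.
Qed.

Lemma pivot_form_minimal j s : uniq s -> pivot_form j s -> minimal_in_class j s.
Proof.
move=> s_uniq [P [S [B [es allS allB]]]] t congr_t t_le.
have eq_st := congj_perm congr_t.
have t_uniq : uniq t by rewrite -(perm_uniq eq_st).
have jt : j \in t by rewrite -(perm_mem eq_st) es mem_cat inE eqxx orbT.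
move: t_uniq congr_t t_le; case/splitPr: jt => P' R t_uniq congr_t t_le.
have [jP' jR] := uniq_cat_notin t_uniq.
have [jP _] : j \notin P /\ j \notin S ++ B by apply: uniq_cat_notin; rewrite -es.
have split_t := congj_pivot_split congr_t.
rewrite es pivot_split_form // pivot_split_notin // in split_t.
have [[S' [B' [eR allS' allB']]]|[V [c [a [W [eR /andP[aj jc]]]]]]] :=
  small_large_or_descent jR.
  by move: split_t; rewrite eR -pivot_split_notin // pivot_split_form // es => -[-> -> ->].
case: split_t => eP eS eB; subst P'.
have aS : a \in S by rewrite eS eR mem_filter aj !(mem_cat, inE, eqxx, orbT).
have cB : c \in B by rewrite eB eR mem_filter jc !(mem_cat, inE, eqxx, orbT).
have et : P ++ j :: R = (P ++ j :: rcons V c) ++ a :: W by rewrite eR -catA /= cat_rcons.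
have /t_le /and4P[_ _ _] : vinv (P ++ j :: R) a c.
  apply/and4P; split; first exact: ltn_trans aj jc.
  - by rewrite eR !(mem_cat, inE, eqxx, orbT).
  - by rewrite eR !(mem_cat, inE, eqxx, orbT).
  rewrite et; apply: index_cat_uniq_lt; first by rewrite -et.
    by rewrite !(mem_cat, inE, mem_rcons, eqxx, orbT).
  exact: mem_head.
have idx_s : index a s < index c s.
  rewrite es -[j :: S ++ B]/((j :: S) ++ B) catA; apply: index_cat_uniq_lt => //.
  - by rewrite -catA -es.
  - by rewrite mem_cat inE aS !orbT.
by rewrite ltnNge (ltnW idx_s).
Qed.

Lemma minimal_in_class_pivot_form j s : uniq s -> j \in s ->
  minimal_in_class j s <-> pivot_form j s.
Proof.
by move=> s_uniq js; split; [exact: minimal_pivot_form | exact: pivot_form_minimal].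
Qed.

Definition pivot_block (n j p0 k : nat) (w : seq nat) : Prop :=
  [/\ p0 <= k < n, nth 0 w p0 = j,
      forall p, p0 < p <= k -> nth 0 w p < j &
      forall p, k < p < n -> j < nth 0 w p].

(* Positions are 0-indexed, so [s_k] exchanges positions [k.-1] and [k]. In
   state [h_k] the letter [j] sits at position [k] and only larger letters
   follow it; in state [i_k] it sits at some position [p0 < k], followed by
   smaller letters up to position [k] and by larger letters after it. *)
Definition state_inv (n j : nat) (q : ustate) (w : seq nat) : Prop :=
  match q with
  | Hs k => pivot_block n j k k w
  | Is k => exists2 p0, p0 < k & pivot_block n j p0 k w
  | Ds _ => True
  end.

Section PivotBlock.

Variables (n j : nat) (w : seq nat).
Hypothesis size_w : size w = n.

Lemma pivot_block_swap_away p0 k i : pivot_block n j p0 k w -> 1 <= i < n ->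
  i != p0 -> i != p0.+1 -> i != k.+1 -> pivot_block n j p0 k (swap_pos w i).
Proof.
move=> [hk w_p0 small large] hi ip0 ip0S ikS.
have hw : 1 <= i < size w by rewrite size_w.
split=> [//||p hp|p hp]; rewrite nth_swap_pos //.
- by rewrite ifF ?ifF //; lia.
- by case: eqP => [?|_]; [|case: eqP => [?|_]]; apply: small; lia.
- by case: eqP => [?|_]; [|case: eqP => [?|_]]; apply: large; lia.
Qed.

Lemma pivot_block_swap_left p0 k : pivot_block n j p0 k w -> 0 < p0 ->
  nth 0 w p0.-1 < j -> pivot_block n j p0.-1 k (swap_pos w p0).
Proof.
move=> [hk w_p0 small large] p0_gt0 w_lt.
have hw : 1 <= p0 < size w by rewrite size_w; lia.
split=> [|||p hp]; rewrite ?nth_swap_pos //; first lia.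
- by rewrite eqxx.
- move=> p hp; rewrite nth_swap_pos // ifF; last lia.
  by case: eqP => [//|?]; apply: small; lia.
- by rewrite !ifF; [apply: large | |]; lia.
Qed.

Lemma pivot_block_swap_right p0 k : pivot_block n j p0 k w -> p0 < k ->
  pivot_block n j p0.+1 k (swap_pos w p0.+1).
Proof.
move=> [hk w_p0 small large] p0k.
have hw : 1 <= p0.+1 < size w by rewrite size_w; lia.
split=> [|||p hp]; rewrite ?nth_swap_pos //; first lia.
- by rewrite ifF ?eqxx //; lia.
- move=> p hp; rewrite nth_swap_pos // !ifF; [apply: small | |]; lia.
- by rewrite !ifF; [apply: large | |]; lia.
Qed.

Lemma pivot_block_swap_advance k : pivot_block n j k k w -> k.+1 < n ->
  pivot_block n j k.+1 k.+1 (swap_pos w k.+1).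
Proof.
move=> [hk w_k _ large] kSn.
have hw : 1 <= k.+1 < size w by rewrite size_w.
split=> [|||p hp]; rewrite ?nth_swap_pos //; first lia.
- by rewrite ifF ?eqxx; [exact: w_k | lia].
- by move=> p hp; lia.
- by rewrite !ifF; [apply: large | |]; lia.
Qed.

Lemma pivot_block_swap_retreat k : pivot_block n j k k w -> 0 < k ->
  j < nth 0 w k.-1 -> pivot_block n j k.-1 k.-1 (swap_pos w k).
Proof.
move=> [hk w_k _ large] k_gt0 w_gt.
have hw : 1 <= k < size w by rewrite size_w; lia.
split=> [|||p hp]; rewrite ?nth_swap_pos //; first lia.
- by rewrite eqxx.
- by move=> p hp; lia.
- by rewrite ifF //; [case: eqP => [//|?]; apply: large | ]; lia.
Qed.

Lemma state_inv_step q i : 1 <= i <= n - 1 -> nth 0 w i.-1 < nth 0 w i ->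
  state_inv n j q w -> state_inv n j (ustep n q i) (swap_pos w i).
Proof.
move=> hi asc; case: q => k //=.
- move=> bk; have [_ w_k _ _] := bk.
  case: eqP => [ik|ik].
    exists k.-1; first lia.
    by subst i; apply: pivot_block_swap_left; rewrite ?w_k //; lia.
  case: ifP => [/andP[/eqP-> kn]|kS]; first by apply: pivot_block_swap_advance => //; lia.
  by apply: pivot_block_swap_away => //; apply/eqP; lia.
- move=> [p0 p0k bp0]; have [_ w_p0 small _] := bp0.
  case: ifP => // kS.
  have ip0S : i != p0.+1.
    by apply/eqP=> ei; move: asc; rewrite ei /= w_p0 ltnNge ltnW // small //; lia.
  have [ip0|ip0] := eqVneq i p0.
    exists p0.-1; first lia.
    by subst i; apply: pivot_block_swap_left; rewrite ?w_p0 //; lia.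
  by exists p0 => //; apply: pivot_block_swap_away => //; apply/eqP; lia.
Qed.

Lemma state_inv_unstep q : perm_eq w (iota 1 n) -> w != iota 1 n ->
  uaccepting q -> state_inv n j q w ->
  exists i q', [/\ 1 <= i < n, nth 0 w i < nth 0 w i.-1, uaccepting q',
                   ustep n q' i = q & state_inv n j q' (swap_pos w i)].
Proof.
move=> eq_w w_neq; case: q => k //= _.
- move=> bk; have [hk w_k _ large] := bk.
  have [/andP[k_gt0 w_gt]|no_retreat] := boolP ((0 < k) && (j < nth 0 w k.-1)).
    exists k, (Hs k.-1); split=> //=; first lia; first by rewrite w_k.
      by rewrite ifF ?prednK ?eqxx ?ifT //; lia.
    exact: pivot_block_swap_retreat.
  have [i hi desc] := perm_iota_descent eq_w w_neq; rewrite size_w in hi.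
  have ik : i != k.
    by apply/eqP=> ik; move: no_retreat desc; rewrite ik w_k; lia.
  have ikS : i != k.+1.
    by apply/eqP=> ikS; move: desc; rewrite ikS w_k ltnNge ltnW ?large //; lia.
  exists i, (Hs k); split=> //=; first by rewrite (negbTE ik) (negbTE ikS).
  exact: pivot_block_swap_away.
- move=> [p0 p0k bp0]; have [hk w_p0 small _] := bp0.
  have desc : nth 0 w p0.+1 < nth 0 w p0.+1.-1 by rewrite /= w_p0 small //; lia.
  have [ek|p0Sk] := eqVneq p0.+1 k.
    subst k; exists p0.+1, (Hs p0.+1); split=> //=; first lia; first by rewrite eqxx.
    exact: pivot_block_swap_right.
  exists p0.+1, (Is k); split=> //=; first lia; first by rewrite ifF //; lia.
  by exists p0.+1; [lia | apply: pivot_block_swap_right].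
Qed.

Lemma pivot_block_form p0 k : pivot_block n j p0 k w -> pivot_form j w.
Proof.
move=> [hk w_p0 small large].
exists (take p0 w), (take (k - p0) (drop p0.+1 w)), (drop k.+1 w); split.
- have -> : drop k.+1 w = drop (k - p0) (drop p0.+1 w) by rewrite drop_drop; congr drop; lia.
  by rewrite cat_take_drop -w_p0 -drop_nth ?cat_take_drop //; lia.
- apply/(all_nthP 0) => p; rewrite size_takel ?size_drop => [hp|]; last lia.
  by rewrite nth_take // nth_drop small //; lia.
- apply/(all_nthP 0) => p; rewrite size_drop nth_drop => hp.
  by rewrite large //; lia.
Qed.

Lemma pivot_form_block P S B : w = P ++ j :: S ++ B ->
  all (fun x => x < j) S -> all (fun x => j < x) B ->
  pivot_block n j (size P) (size P + size S) w.
Proof.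
move=> ew allS allB.
have nth_w p : size P < p ->
    nth 0 w p = nth 0 (S ++ B) (p - (size P).+1).
  by move=> hp; rewrite ew nth_cat ltnNge (ltnW hp) /= -subnSK.
have size_w' : n = size P + (size S + size B).+1 by rewrite -size_w ew size_cat /= size_cat.
split=> [|||p hp]; first lia.
- by rewrite ew nth_cat ltnn subnn.
- move=> p hp; rewrite nth_w ?nth_cat ?ifT; try lia.
  by apply: (all_nthP 0 allS); lia.
- rewrite nth_w ?nth_cat ?ifF; try lia.
  by apply: (all_nthP 0 allB); lia.
Qed.

Lemma pivot_form_state_inv :
  pivot_form j w <-> exists2 q, uaccepting q & state_inv n j q w.
Proof.
split=> [[P [S [B [ew allS allB]]]]|[[k|k|//] _ /=]].
- have bw := pivot_form_block ew allS allB.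
  case: S allS ew bw => [|x S] _ ew bw; first by exists (Hs (size P)); rewrite // addn0 in bw.
  by exists (Is (size P + size (x :: S))) => //=; exists (size P) => //; rewrite /=; lia.
- exact: pivot_block_form.
- by case=> p0 _; apply: pivot_block_form.
Qed.

End PivotBlock.

Lemma state_inv_iota n j q : 1 <= j <= n -> uaccepting q ->
  state_inv n j q (iota 1 n) -> q = Hs j.-1.
Proof.
move=> hj; case: q => k //= _.
  by move=> [hk]; rewrite nth_iota; [move=> <- | lia].
move=> [p0 p0k [hk]]; rewrite nth_iota; last lia.
by move=> w_p0 /(_ p0.+1); rewrite nth_iota; lia.
Qed.

Lemma state_inv_reduced_run n j ws s : 1 <= j <= n -> reduced_word n ws s ->
  state_inv n j (foldl (ustep n) (Hs j.-1) ws) s.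
Proof.
rewrite /reduced_word ninvE => hj [+ [<-]].
elim/last_ind: ws => [|ws i IHws].
  by move=> _ _; split=> [|||p hp]; rewrite ?nth_iota; lia.
rewrite all_rcons word_perm_rcons size_rcons foldl_rcons => /andP[hi all_ws] ninv_ws.
have := ninv_rec_word_perm n ws; have := size_word_perm n ws => size_ws ninv_le.
have hi' : 1 <= i < size (word_perm n ws) by rewrite size_ws; lia.
have := ninv_rec_swap hi'; rewrite -ninv_ws => ninv_eq.
apply: state_inv_step; rewrite ?size_ws //; first by lia.
by apply: IHws => //; lia.
Qed.

Lemma reduced_word_of_state_inv n j q s : 1 <= j <= n -> perm_eq s (iota 1 n) ->
  uaccepting q -> state_inv n j q s ->
  exists2 ws, reduced_word n ws s & foldl (ustep n) (Hs j.-1) ws = q.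
Proof.
rewrite /reduced_word ninvE => hj.
elim: {s}(ninv_rec s) {-2}s q (erefl (ninv_rec s)) => [|m IHm] s q ninv_s eq_s acc_q inv_q.
  have s_iota := ninv_rec_eq0 eq_s ninv_s; subst s.
  by exists [::]; rewrite ?ninv_rec_iota // (state_inv_iota hj acc_q inv_q).
have size_s : size s = n by rewrite (perm_size eq_s) size_iota.
have s_neq : s != iota 1 n by apply: contraPneq ninv_s => ->; rewrite ninv_rec_iota.
have [i [q' [hi desc acc_q' step_q' inv_q']]] := state_inv_unstep size_s eq_s s_neq acc_q inv_q.
have hi' : 1 <= i < size s by rewrite size_s.
have ninv_s' : ninv_rec (swap_pos s i) = m.
  by have := ninv_rec_swap hi'; rewrite desc ltnNge ltnW //= ninv_s; lia.
have eq_s' : perm_eq (swap_pos s i) (iota 1 n) by rewrite (perm_trans (perm_swap_pos _ _)).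
have [ws [all_ws [ws_s ws_size]] run_ws] := IHm _ _ ninv_s' eq_s' acc_q' inv_q'.
exists (rcons ws i); last by rewrite foldl_rcons run_ws.
rewrite all_rcons all_ws word_perm_rcons ws_s swap_posK size_rcons ws_size ninv_s ninv_s'.
by split=> //; lia.
Qed.

Theorem theorem1p1 (n j : nat) (sigma : seq nat) :
  3 <= n -> 2 <= j <= n - 1 -> is_perm n sigma ->
  (minimal_in_class j sigma <->
   exists ws : seq nat, reduced_word n ws sigma /\ accepted n j ws).
Proof.
rewrite /is_perm => _ hj eq_s.
have hj' : 1 <= j <= n by lia.
have size_s : size sigma = n by rewrite (perm_size eq_s) size_iota.
have js : j \in sigma by rewrite (perm_mem eq_s) mem_iota; lia.
rewrite minimal_in_class_pivot_form ?(perm_uniq eq_s) ?iota_uniq //.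
rewrite (pivot_form_state_inv j size_s).
split=> [[q acc_q inv_q]|[ws [red_ws acc_ws]]].
  have [ws red_ws run_ws] := reduced_word_of_state_inv hj' eq_s acc_q inv_q.
  by exists ws; rewrite /accepted run_ws.
by exists (foldl (ustep n) (Hs j.-1) ws) => //; apply: state_inv_reduced_run.
Qed.
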